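(* Let $G$ be a graph. Apply the following operations repeatedly until none is applicable: (1) if $v$ is a vertex of degree at most $2$ and $e$ an edge incident to $v$, contract $v$ along $e$; (2) if $v$ is an isolated vertex, delete $v$. The resulting graph is the (canonical) minor-3-core of $G$.
   Context: Graphs are simple and undirected. Contracting a vertex $u$ along an edge $\{u,v\}$ (i.e. to $v$) produces the graph with vertex set $V\setminus\{u\}$ and edge set consisting of all edges not incident to $u$ together with all edges $\{u',v\}$ with $u'\neq v$ and $\{u',u\}\in E$. A minor of $G$ is a graph obtained from $G$ by vertex contractions and subgraph operations; its vertices are (non-contracted) vertices of $G$. A minor-3-core of $G$ is a minor $H$ of $G$ with minimum degree at least $3$ such that no minor of $G$ with minimum degree at least $3$ has more edges than $H$. A vertex $v$ of a minor-3-core $C$ has the disjoint-paths property if, for its neighbours $u_1,\dots,u_{\Delta_C(v)}$ in $C$, there are paths in $G$ from $v$ to the $u_i$ pairwise sharing only $v$; the canonical minor-3-core is the minor-3-core in which every vertex has this property (it exists and is unique, and every minor-3-core is isomorphic to it). *)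

From mathcomp Require Import all_boot.
Set Implicit Arguments. Unset Strict Implicit. Unset Printing Implicit Defensive.

Section Graphs.
Variable T : finType.

Definition graph := ({set T} * {set {set T}})%type.
Definition verts (G : graph) : {set T} := G.1.
Definition edges (G : graph) : {set {set T}} := G.2.

Definition wf_graph (G : graph) : Prop :=
  forall e, e \in edges G -> exists x y, [/\ x != y, x \in verts G, y \in verts G & e = [set x; y]].

Definition adj (G : graph) (x y : T) : bool := [set x; y] \in edges G.

Definition deg (G : graph) (v : T) : nat := #|[set e in edges G | v \in e]|.

Definition contract (G : graph) (u v : T) : graph :=
  (verts G :\ u,
   [set e in edges G | u \notin e]
     :|: [set [set u'; v] | u' in [set u' | (u' != v) && ([set u'; u] \in edges G)]]).

Definition del_vertex (G : graph) (v : T) : graph :=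
  (verts G :\ v, [set e in edges G | v \notin e]).

Definition del_edge (G : graph) (e : {set T}) : graph :=
  (verts G, edges G :\ e).

Inductive minor_step (G : graph) : graph -> Prop :=
  | ms_contract u v : [set u; v] \in edges G -> minor_step G (contract G u v)
  | ms_del_vertex v : v \in verts G -> minor_step G (del_vertex G v)
  | ms_del_edge e : e \in edges G -> minor_step G (del_edge G e).

Inductive rtc (R : graph -> graph -> Prop) (G : graph) : graph -> Prop :=
  | rtc_refl : rtc R G G
  | rtc_step H K : rtc R G H -> R H K -> rtc R G K.

Definition is_minor (G H : graph) : Prop := rtc minor_step G H.

Definition mindeg_ge3 (H : graph) : Prop := forall v, v \in verts H -> 3 <= deg H v.

Definition minor3core (G H : graph) : Prop :=
  [/\ is_minor G H, mindeg_ge3 H &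
      forall H', is_minor G H' -> mindeg_ge3 H' -> #|edges H'| <= #|edges H| ].

Definition gpath (G : graph) (v u : T) (p : seq T) : Prop :=
  [/\ v \in verts G, all (fun x => x \in verts G) p, path (adj G) v p & last v p = u].

Definition disjoint_paths_prop (G C : graph) (v : T) : Prop :=
  exists P : T -> seq T,
    (forall u, adj C v u -> gpath G v u (P u)) /\
    (forall u u', adj C v u -> adj C v u' -> u != u' ->
       [set x in v :: P u] :&: [set x in v :: P u'] = [set v]).

Definition canonical_minor3core (G C : graph) : Prop :=
  minor3core G C /\ forall v, v \in verts C -> disjoint_paths_prop G C v.

Inductive red_step (G : graph) : graph -> Prop :=
  | rs_contract v w : v \in verts G -> deg G v <= 2 -> [set v; w] \in edges G ->
      red_step G (contract G v w)
  | rs_isolated v : v \in verts G -> deg G v = 0 -> red_step G (del_vertex G v).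

End Graphs.

(* The reduction steps are harmless for minors of minimum degree 3.  Represent a
   minor K of G by connected branch sets.  A vertex v of G of degree at most 2
   cannot form on its own the branch set of a vertex of K of degree at least 3,
   so after renaming K we may assume that v is not a vertex of K.  Contracting v
   into a neighbour w then keeps a model of K, v being absorbed by w if w lies in
   the branch set of v, and otherwise by its other neighbour in that branch set,
   which becomes adjacent to w.  An isolated vertex lies in no branch set.  Hence
   every minor of G of minimum degree 3 has a copy with as many edges among the
   minors of the final graph H; since minors never have more edges and H has
   minimum degree 3 (no step applies), H is a minor-3-core.
   For the disjoint-paths property, every edge of the current graph is realised
   by a path of G whose interior consists of removed vertices, the interiors of
   distinct edges being disjoint; contracting a vertex of degree at most 2
   concatenates the paths of its two edges, which preserves this invariant. *)

From mathcomp Require Import all_boot fingroup perm.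
Set Implicit Arguments. Unset Strict Implicit. Unset Printing Implicit Defensive.

Lemma connect_map (aT rT : finType) (e : rel aT) (e' : rel rT) (f : aT -> rT) :
  (forall a b, e a b -> connect e' (f a) (f b)) ->
  forall a b, connect e a b -> connect e' (f a) (f b).
Proof.
move=> he a b /connectP [p pth ->]; elim: p a pth => [|c p IH] a /=.
  by move=> _; exact: connect0.
by case/andP=> eac pth; exact: connect_trans (he _ _ eac) (IH _ pth).
Qed.

Lemma connect_first_step (T : finType) (e : rel T) a b :
  connect e a b -> a != b -> exists c, e a c.
Proof.
case/connectP=> [[|c p]] /=; first by move=> _ ->; rewrite eqxx.
by case/andP=> eac _ _ _; exists c.
Qed.

Section Graphs.
Variable T : finType.
Implicit Types (G H K L : graph T) (a b c d u v w x y z : T).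

Lemma set2C a b : [set a; b] = [set b; a].
Proof. exact: setUC. Qed.

Lemma set2_inj a b c d :
  [set a; b] = [set c; d] -> (a = c /\ b = d) \/ (a = d /\ b = c).
Proof.
move=> E.
have : a \in [set c; d] by rewrite -E !inE eqxx.
have : b \in [set c; d] by rewrite -E !inE eqxx orbT.
have : c \in [set a; b] by rewrite E !inE eqxx.
have : d \in [set a; b] by rewrite E !inE eqxx orbT.
rewrite !inE => /orP[]/eqP hd /orP[]/eqP hc /orP[]/eqP hb /orP[]/eqP ha;
  subst; by [left|right].
Qed.

Lemma adjC G : symmetric (adj G).
Proof. by move=> a b; rewrite /adj set2C. Qed.

Lemma wf_adj G a b : wf_graph G -> adj G a b ->
  [/\ a != b, a \in verts G & b \in verts G].
Proof.
move=> wf /wf [x [y [xy xG yG /set2_inj [[-> ->]|[-> ->]]]]]; split=> //.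
by rewrite eq_sym.
Qed.

Lemma wf_edge G e : wf_graph G -> e \in edges G ->
  exists a b, e = [set a; b] /\ adj G a b.
Proof.
move=> wf eG; have [a [b [_ _ _ E]]] := wf _ eG.
by exists a, b; split=> //; rewrite /adj -E.
Qed.

Definition nbrs G v := [set z | adj G v z].

Lemma card_nbrs G v : wf_graph G -> #|nbrs G v| = deg G v.
Proof.
move=> wf; rewrite /deg.
have -> : [set e in edges G | v \in e] = [set [set v; z] | z in nbrs G v].
  apply/setP=> e; rewrite inE; apply/idP/imsetP => [/andP[eG ve]|[z]].
    have [a [b [Eab hab]]] := wf_edge wf eG.
    move: ve hab; rewrite Eab !inE => /orP[]/eqP<- hab.
      by exists b; rewrite ?inE.
    by exists a; rewrite ?inE 1?adjC // set2C.
  by rewrite inE => hz ->; rewrite !inE eqxx andbT.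
apply/esym/card_in_imset => z z'; rewrite !inE => hz _ /set2_inj [[_ //]|[_ zv]].
by have [] := wf_adj wf hz; rewrite zv eqxx.
Qed.

Lemma deg_gt0_adj G v : wf_graph G -> 0 < deg G v -> exists z, adj G v z.
Proof.
by move=> wf; rewrite -card_nbrs // card_gt0 => /set0Pn [z]; rewrite inE; exists z.
Qed.

Lemma deg0_nadj G v z : wf_graph G -> deg G v = 0 -> ~~ adj G v z.
Proof.
by move=> wf; rewrite -card_nbrs // => /cards0_eq/setP/(_ z); rewrite !inE => ->.
Qed.

Lemma adj_deg2 G v w u z : wf_graph G -> deg G v <= 2 ->
  adj G v w -> adj G v u -> u != w -> adj G v z -> (z == w) || (z == u).
Proof.
move=> wf dv hw hu uw hz.
suff : nbrs G v = [set w; u] by move/setP/(_ z); rewrite !inE hz.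
have wu : w != u by rewrite eq_sym.
apply/esym/eqP; rewrite eqEcard cards2 wu card_nbrs // dv andbT.
by apply/subsetP=> y; rewrite !inE => /orP[]/eqP->.
Qed.

Lemma adj_contract_keep G u v a b :
  adj G a b -> a != u -> b != u -> adj (contract G u v) a b.
Proof.
rewrite /adj /contract /edges /= => h au bu; rewrite !inE.
by rewrite h negb_or ![u == _]eq_sym au bu.
Qed.

Lemma adj_contract_new G u v a :
  adj G a u -> a != v -> adj (contract G u v) a v.
Proof.
rewrite /adj /contract /edges /= => h av; rewrite !inE.
by apply/orP; right; apply/imsetP; exists a; rewrite // inE av.
Qed.

Lemma adj_contractP G u v a b : adj (contract G u v) a b ->
  [/\ adj G a b, a != u & b != u] \/
  [/\ b = v, adj G a u & a != v] \/ [/\ a = v, adj G b u & b != v].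
Proof.
rewrite /adj /contract /edges /= !inE => /orP[/andP[h]|].
  by rewrite negb_or ![u == _]eq_sym => /andP[au bu]; left.
case/imsetP=> u'; rewrite inE => /andP[u'v h] /set2_inj [[-> ->]|[-> ->]]; right.
  by left.
by right.
Qed.

Lemma contract_target_adj G v w z :
  adj G v z -> z != w -> adj (contract G v w) w z.
Proof. by move=> h zw; rewrite adjC; apply: adj_contract_new; rewrite // adjC. Qed.

Definition retarget u v x : T := if x == u then v else x.

Lemma adj_contract_retarget G v w u a b :
  (forall z, adj G v z -> z != u -> adj (contract G v w) u z) ->
  adj G a b -> retarget v u a != retarget v u b ->
  adj (contract G v w) (retarget v u a) (retarget v u b).
Proof.
move=> hv hab; rewrite /retarget.
case: (eqVneq a v) => [av|av]; case: (eqVneq b v) => [bv|bv].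
- by rewrite eqxx.
- by subst a => ub; apply: hv; rewrite // eq_sym.
- by subst b => au; rewrite adjC; apply: hv; rewrite 1?adjC // eq_sym.
- by move=> _; apply: adj_contract_keep.
Qed.

Lemma verts_contract G u v : verts (contract G u v) = verts G :\ u.
Proof. by []. Qed.

Lemma verts_del_vertex G v : verts (del_vertex G v) = verts G :\ v.
Proof. by []. Qed.

Lemma adj_del_vertex G v a b :
  adj (del_vertex G v) a b = [&& adj G a b, a != v & b != v].
Proof.
rewrite /adj /del_vertex /edges /= !inE negb_or ![v == _]eq_sym.
by case: ([set a; b] \in G.2).
Qed.

Lemma wf_contract G u v : wf_graph G -> adj G u v -> wf_graph (contract G u v).
Proof.
move=> wf huv e; rewrite verts_contract => /setUP[|/imsetP[u' Hu' ->]].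
  rewrite inE => /andP[/wf [x [y [xy xG yG E]]] ue].
  exists x, y; split; rewrite // !inE ?xG ?yG andbT;
    by apply: contraNneq ue => <-; rewrite E !inE eqxx ?orbT.
move: Hu'; rewrite inE => /andP[u'v h].
have [u'u u'G _] := wf_adj wf h.
have [uv _ vG] := wf_adj wf huv.
by exists u', v; split; rewrite // !inE ?u'G ?vG andbT // eq_sym.
Qed.

Lemma wf_del_vertex G v : wf_graph G -> wf_graph (del_vertex G v).
Proof.
move=> wf e; rewrite verts_del_vertex inE => /andP[/wf [x [y [xy xG yG E]]] ve].
exists x, y; split; rewrite // !inE ?xG ?yG andbT;
  by apply: contraNneq ve => <-; rewrite E !inE eqxx ?orbT.
Qed.

Lemma wf_del_edge G e : wf_graph G -> wf_graph (del_edge G e).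
Proof. by move=> wf f; rewrite /del_edge /edges /= !inE => /andP[_ /wf]. Qed.

Lemma wf_minor_step G K : wf_graph G -> minor_step G K -> wf_graph K.
Proof.
move=> wf [u v h|v _|e _];
  [exact: wf_contract|exact: wf_del_vertex|exact: wf_del_edge].
Qed.

Lemma red_minor_step G K : red_step G K -> minor_step G K.
Proof. by case=> [v w _ _ h|v vG _]; constructor. Qed.

Lemma wf_red_step G K : wf_graph G -> red_step G K -> wf_graph K.
Proof. by move=> wf /red_minor_step; apply: wf_minor_step. Qed.

Lemma rtc_inv (R : graph T -> graph T -> Prop) (I : graph T -> Prop) G K :
  (forall A B, I A -> R A B -> I B) -> I G -> rtc R G K -> I K.
Proof. by move=> hR IG; elim=> // A B _ IA /(hR _ _ IA). Qed.

Lemma rtc_first (R : graph T -> graph T -> Prop) A B C :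
  R A B -> rtc R B C -> rtc R A C.
Proof.
move=> hAB; elim=> [|X Y _ IH hXY]; last exact: rtc_step IH hXY.
exact: rtc_step (rtc_refl _ _) hAB.
Qed.

Lemma rtc_sub (R R' : graph T -> graph T -> Prop) A B :
  (forall X Y, R X Y -> R' X Y) -> rtc R A B -> rtc R' A B.
Proof. by move=> h; elim=> [|X Y _ IH /h]; [exact: rtc_refl|exact: rtc_step]. Qed.

(* Every edge of the contraction is the image of an edge of G under
   [retarget u v]. *)
Lemma card_contract G u v : wf_graph G -> #|edges (contract G u v)| <= #|edges G|.
Proof.
move=> wf.
apply: leq_trans (leq_imset_card (fun e : {set T} => retarget u v @: e) (edges G)).
apply/subset_leq_card/subsetP => e; rewrite /contract /edges /= !inE.
case/orP=> [/andP[eG ue]|/imsetP[u' Hu' ->]].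
  apply/imsetP; exists e => //; rewrite -[LHS]imset_id; apply: eq_in_imset => x xe.
  by rewrite /retarget; case: eqP => // xu; move: ue; rewrite -xu xe.
move: Hu'; rewrite inE => /andP[u'v h].
have [u'u _ _] := wf_adj wf h.
apply/imsetP; exists [set u'; u] => //.
by rewrite imsetU1 imset_set1 /retarget eqxx (negbTE u'u).
Qed.

Lemma card_minor_step G K : wf_graph G -> minor_step G K -> #|edges K| <= #|edges G|.
Proof.
move=> wf [u v _|v _|e _]; first exact: card_contract.
  by apply/subset_leq_card/subsetP => e; rewrite /del_vertex /edges /= inE => /andP[].
by apply/subset_leq_card/subsetP => f; rewrite /del_edge /edges /= inE => /andP[].
Qed.

Lemma card_minor G K : wf_graph G -> is_minor G K -> #|edges K| <= #|edges G|.
Proof.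
move=> wf; elim=> // A B mA IH st.
exact: leq_trans (card_minor_step (rtc_inv wf_minor_step wf mA) st) IH.
Qed.

Definition branch_adj G (r : T -> option T) x : rel T :=
  fun a b => [&& adj G a b, r a == Some x & r b == Some x].

(* [r y = Some x]: the vertex [y] of G lies in the branch set of the vertex [x]
   of K, which is named after one of its own vertices. *)
Record model G K (r : T -> option T) : Prop := Model {
  model_wf : wf_graph K;
  model_self : forall x, x \in verts K -> r x = Some x;
  model_rng : forall y x, r y = Some x -> x \in verts K;
  model_dom : forall y x, r y = Some x -> y \in verts G;
  model_connect : forall y x, r y = Some x -> connect (branch_adj G r x) y x;
  model_edge : forall a b, adj K a b ->
    exists c d, [/\ r c = Some a, r d = Some b & adj G c d] }.

Lemma connect_branchC G r x a b :
  connect (branch_adj G r x) a b = connect (branch_adj G r x) b a.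
Proof.
apply: sym_connect_sym => c d.
by rewrite /branch_adj adjC; case: (adj G d c); rewrite //= andbC.
Qed.

Lemma model_nonbranch G K r y x :
  model G K r -> r y = Some x -> y != x -> y \notin verts K.
Proof. by move=> M ry; apply: contraNN => /(model_self M); rewrite ry => -[<-]. Qed.

Lemma subgraph_model G K : wf_graph K -> verts K \subset verts G ->
  (forall a b, adj K a b -> adj G a b) ->
  model G K (fun y => if y \in verts K then Some y else None).
Proof.
move=> wf sub hE; split=> //.
- by move=> x ->.
- by move=> y x; case: ifP => // yK -[<-].
- by move=> y x; case: ifP => // yK _; apply: (subsetP sub).
- by move=> y x; case: ifP => // yK -[<-]; apply: connect0.
- move=> a b h; have [_ aK bK] := wf_adj wf h.
  by exists a, b; rewrite aK bK hE.
Qed.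

Lemma model_map G G' K r r' (f : T -> T) :
  model G K r -> {in verts K, f =1 id} ->
  (forall y x, r y = Some x -> r' (f y) = Some x) ->
  (forall y' x, r' y' = Some x -> exists2 y, r y = Some x & f y = y') ->
  (forall y x, r' y = Some x -> y \in verts G') ->
  (forall a b x x', adj G a b -> r a = Some x -> r b = Some x' ->
     f a != f b -> adj G' (f a) (f b)) ->
  model G' K r'.
Proof.
move=> M fK hr hr' hV hE; split.
- exact: model_wf M.
- by move=> x xK; rewrite -{1}(fK x xK) (hr _ _ (model_self M xK)).
- by move=> y x /hr' [z /(model_rng M)].
- exact: hV.
- move=> y' x /hr' [y ry <-]; rewrite -[x in connect _ _ x](fK x (model_rng M ry)).
  apply: connect_map (model_connect M ry) => a b /and3P [hab /eqP ra /eqP rb].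
  have [->|ne] := eqVneq (f a) (f b); first exact: connect0.
  apply: connect1; rewrite /branch_adj (hE _ _ _ _ hab ra rb ne).
  by rewrite (hr _ _ ra) (hr _ _ rb) eqxx.
- move=> a b hab; have [c [d [rc rd hcd]]] := model_edge M hab.
  have [ab _ _] := wf_adj (model_wf M) hab.
  exists (f c), (f d); split; [exact: hr|exact: hr|apply: (hE _ _ _ _ hcd rc rd)].
  by apply: contra_neq ab => fcd; apply: Some_inj; rewrite -(hr _ _ rc) fcd (hr _ _ rd).
Qed.

Lemma model_transfer G G' K r : model G K r ->
  (forall y x, r y = Some x -> y \in verts G') ->
  (forall a b x x', adj G a b -> r a = Some x -> r b = Some x' -> adj G' a b) ->
  model G' K r.
Proof.
move=> M hV hE; apply: (model_map (f := id) M) => //.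
- by move=> y x; exists y.
- by move=> a b x x' h ra rb _; apply: hE h ra rb.
Qed.

Lemma labeled_neq_unlabeled (r : T -> option T) v y x :
  r v = None -> r y = Some x -> y != v.
Proof. by move=> rv ry; apply/eqP => yv; rewrite yv rv in ry. Qed.

Lemma model_del_vertex G K r v : model G K r -> r v = None ->
  model (del_vertex G v) K r.
Proof.
move=> M /labeled_neq_unlabeled nv.
apply: (model_transfer M) => [y x ry|a b x x' h ra rb].
  by rewrite verts_del_vertex !inE (nv _ _ ry) (model_dom M ry).
by rewrite adj_del_vertex h (nv _ _ ra) (nv _ _ rb).
Qed.

Lemma model_contract_unlabeled G K r v w : model G K r -> r v = None ->
  model (contract G v w) K r.
Proof.
move=> M /labeled_neq_unlabeled nv.
apply: (model_transfer M) => [y x ry|a b x x' h ra rb].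
  by rewrite verts_contract !inE (nv _ _ ry) (model_dom M ry).
exact: adj_contract_keep h (nv _ _ ra) (nv _ _ rb).
Qed.

(* G contracts [v] into [w], but the model absorbs [v] into its neighbour [u]
   of the same branch set. *)
Lemma model_contract_branch G K r v w u x : wf_graph G -> model G K r ->
  v \notin verts K -> r v = Some x -> r u = Some x -> adj G v u ->
  (forall z, adj G v z -> z != u -> adj (contract G v w) u z) ->
  model (contract G v w) K (fun y => if y == v then None else r y).
Proof.
move=> wf M vK rv ru hvu hv; have [vu _ _] := wf_adj wf hvu.
apply: (model_map (f := retarget v u) M).
- by move=> y yK; rewrite /retarget; case: eqVneq => // yv; rewrite -yv yK in vK.
- move=> y x0 ry; rewrite /retarget; case: (eqVneq y v) => [yv|yv].
    by rewrite eq_sym (negbTE vu) ru -rv -yv.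
  by rewrite (negbTE yv).
- move=> y x0; case: (eqVneq y v) => [_ //|yv ry].
  by exists y; rewrite // /retarget (negbTE yv).
- move=> y x0; case: (eqVneq y v) => [_ //|yv /(model_dom M)].
  by rewrite verts_contract !inE yv.
- by move=> a b x1 x2 hab _ _; apply: adj_contract_retarget.
Qed.

Lemma model_comp G K L r s : model G K r -> model K L s ->
  model G L (fun y => obind s (r y)).
Proof.
move=> Mr Ms; set rs := fun y => obind s (r y).
have rsP y x : rs y = Some x -> exists2 z, r y = Some z & s z = Some x.
  by rewrite /rs; case: (r y) => //= z; exists z.
have inner y z x : r y = Some z -> s z = Some x -> connect (branch_adj G rs x) y z.
  move=> ry sz; apply: connect_sub (model_connect Mr ry) => a b.
  case/and3P=> hab /eqP ra /eqP rb; apply: connect1.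
  by rewrite /branch_adj /rs ra rb /= sz eqxx hab.
split.
- exact: model_wf Ms.
- move=> x xL; have xK := model_dom Ms (model_self Ms xL).
  by rewrite /rs (model_self Mr xK) /= (model_self Ms xL).
- by move=> y x /rsP [z _ /(model_rng Ms)].
- by move=> y x /rsP [z /(model_dom Mr)].
- move=> y x /rsP [z ry sz]; apply: connect_trans (inner _ _ _ ry sz) _.
  apply: connect_sub (model_connect Ms sz) => a b /and3P [hab /eqP sa /eqP sb].
  have [c [d [rc rd hcd]]] := model_edge Mr hab.
  have cd : branch_adj G rs x c d by rewrite /branch_adj /rs rc rd /= sa sb eqxx hcd.
  have ac : connect (branch_adj G rs x) a c.
    by rewrite connect_branchC; apply: inner rc sa.
  exact: connect_trans ac (connect_trans (connect1 cd) (inner _ _ _ rd sb)).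
- move=> a b hab; have [c [d [sc sd hcd]]] := model_edge Ms hab.
  have [c' [d' [rc rd h]]] := model_edge Mr hcd.
  by exists c', d'; rewrite /rs rc rd.
Qed.

Lemma model_contract_step K u v : wf_graph K -> adj K u v ->
  model K (contract K u v)
    (fun y => if y \in verts K then Some (retarget u v y) else None).
Proof.
move=> wf huv; have [uv uK vK] := wf_adj wf huv.
set s := fun y => _.
have sK y : y \in verts K -> y != u -> s y = Some y.
  by move=> yK yu; rewrite /s yK /retarget (negbTE yu).
have su : s u = Some v by rewrite /s uK /retarget eqxx.
split.
- exact: wf_contract.
- by move=> x; rewrite verts_contract !inE => /andP[xu xK]; apply: sK.
- move=> y x; rewrite /s verts_contract !inE /retarget.
  case: ifP => // yK; case: (eqVneq y u) => [_|yu] -[<-]; first by rewrite eq_sym uv.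
  by rewrite yu.
- by move=> y x; rewrite /s; case: ifP.
- move=> y x; rewrite /s /retarget; case: ifP => // yK.
  case: (eqVneq y u) => [->|_] -[<-]; last exact: connect0.
  have vu : v != u by rewrite eq_sym.
  by apply: connect1; rewrite /branch_adj huv uK vK eqxx (negbTE vu) eqxx.
- move=> a b /adj_contractP [[h au bu]|[[-> h av]|[-> h bv]]].
  + have [_ aK bK] := wf_adj wf h.
    by exists a, b; rewrite !sK.
  + have [au aK _] := wf_adj wf h.
    by exists a, u; rewrite su sK.
  + have [bu bK _] := wf_adj wf h.
    by exists u, b; rewrite su sK // adjC.
Qed.

Lemma minor_step_model K L : wf_graph K -> minor_step K L -> exists s, model K L s.
Proof.
move=> wf [u v h|v vK|e eK]; first by eexists; apply: model_contract_step.
  eexists; apply: subgraph_model; first exact: wf_del_vertex.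
    by rewrite verts_del_vertex subsetDl.
  by move=> a b; rewrite adj_del_vertex => /and3P[].
eexists; apply: subgraph_model; first exact: wf_del_edge.
  by [].
by move=> a b; rewrite /adj /del_edge /edges /= inE => /andP[].
Qed.

Lemma minor_model G K : wf_graph G -> is_minor G K -> exists r, model G K r.
Proof.
move=> wf; elim=> [|A B mA [r M] st].
  by eexists; apply: subgraph_model.
have [s Ms] := minor_step_model (model_wf M) st.
by eexists; apply: model_comp M Ms.
Qed.

Lemma spanning_subgraph_minor G K : verts K = verts G ->
  edges K \subset edges G -> is_minor G K.
Proof.
move=> VK; have [n] := ubnP #|edges G|; elim: n G VK => // n IH G VK /ltnSE hG sub.
case: (pickP [pred e | (e \in edges G) && (e \notin edges K)]) => [e /andP[eG eK]|none].
  apply: rtc_first (ms_del_edge eG) (IH (del_edge G e) VK _ _).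
    by apply: leq_trans hG; rewrite [edges _]/= (cardsD1 e (edges G)) eG.
  apply/subsetP => f fK; rewrite [edges _]/= !inE (subsetP sub _ fK) andbT.
  by apply: contraNneq eK => <-.
have EK : edges K = edges G.
  apply/eqP; rewrite eqEsubset sub; apply/subsetP => e eG.
  by move: (none e); rewrite /= eG => /negbFE.
by case: G K VK EK {IH hG none sub} => [VG EG] [VK' EK'] /= -> ->; apply: rtc_refl.
Qed.

Lemma model_minor G K r : wf_graph G -> model G K r -> is_minor G K.
Proof.
have [n] := ubnP #|verts G|; elim: n G r => // n IH G r /ltnSE hG wf M.
case: (pickP [pred y in verts G | r y == None]) => [y /andP[yG /eqP ry]|labeled].
  have M' := model_del_vertex M ry.
  apply: rtc_first (ms_del_vertex yG) (IH _ _ _ (wf_del_vertex (v := y) wf) M').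
  by apply: leq_trans hG; rewrite verts_del_vertex; apply/proper_card/properD1.
case: (pickP [pred y | (r y != None) && (r y != Some y)]) => [y /andP[]|self].
  case ry: (r y) => [x|] // _; rewrite (inj_eq Some_inj) eq_sym => yx.
  have [z /and3P [hyz _ /eqP rz]] := connect_first_step (model_connect M ry) yx.
  have vK := model_nonbranch M ry yx.
  have M' := model_contract_branch wf M vK ry rz hyz (fun z' h => contract_target_adj h).
  apply: rtc_first (ms_contract hyz) (IH _ _ _ (wf_contract wf hyz) M').
  apply: leq_trans hG; rewrite verts_contract.
  exact/proper_card/properD1/(model_dom M ry).
have rid y : y \in verts G -> r y = Some y.
  move=> yG; move: (labeled y) (self y); rewrite /= yG /=.
  by case: (r y) => //= x _ /negbFE/eqP.
apply: spanning_subgraph_minor.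
  apply/setP => y; apply/idP/idP => [/(model_self M)/(model_dom M) //|].
  by move/rid/(model_rng M).
apply/subsetP => e /(wf_edge (model_wf M)) [a [b [-> /(model_edge M) [c [d [rc rd h]]]]]].
move: (rid _ (model_dom M rc)) (rid _ (model_dom M rd)); rewrite rc rd.
by move=> -[->] -[->].
Qed.

(* If the branch set of [v] were [{v}], every edge of K at [v] would come from an
   edge of G at [v]. *)
Lemma low_degree_branch_nontrivial G K r v : wf_graph G -> model G K r -> mindeg_ge3 K ->
  v \in verts K -> deg G v <= 2 -> exists2 t, r t = Some v & t != v.
Proof.
move=> wf M md vK dv.
case: (pickP [pred t | (r t == Some v) && (t != v)]) => [t /andP[/eqP rt tv]|single].
  by exists t.
suff degKG : deg K v <= deg G v by have := leq_trans (md v vK) (leq_trans degKG dv).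
have wfK := model_wf M; rewrite -!card_nbrs //.
apply: leq_trans (leq_imset_card (fun d => odflt v (r d)) (nbrs G v)).
apply/subset_leq_card/subsetP => b; rewrite inE => hvb.
have [c [d [rc rd hcd]]] := model_edge M hvb.
have cv : c = v by apply/eqP; move: (single c); rewrite /= rc eqxx /= => /negbFE.
by apply/imsetP; exists d; rewrite ?inE -?cv // rd.
Qed.

Definition ren (s : T -> T) K : graph T :=
  (s @: verts K, [set s @: (e : {set T}) | e in edges K]).

Lemma card_edges_ren (s : T -> T) K : injective s -> #|edges (ren s K)| = #|edges K|.
Proof. by move=> inj; rewrite card_imset //; apply: imset_inj. Qed.

Lemma deg_ren (s : T -> T) K x : injective s -> deg (ren s K) (s x) = deg K x.
Proof.
move=> inj; rewrite /deg.
have -> : [set e in edges (ren s K) | s x \in e] =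
          [set s @: (e : {set T}) | e in [set e in edges K | x \in e]].
  apply/setP=> e'; rewrite inE; apply/andP/imsetP => [[/imsetP[e eK ->]]|[e]].
    by rewrite (mem_imset _ _ inj) => xe; exists e; rewrite ?inE ?eK.
  by rewrite inE => /andP[eK xe] ->; rewrite (mem_imset _ _ inj) imset_f.
by rewrite card_imset //; apply: imset_inj.
Qed.

Lemma mindeg_ren (s : T -> T) K : injective s -> mindeg_ge3 K -> mindeg_ge3 (ren s K).
Proof. by move=> inj md _ /imsetP[v vK ->]; rewrite deg_ren //; apply: md. Qed.

Lemma model_ren G K r (s : T -> T) : model G K r -> injective s ->
  (forall x, x \in verts K -> r (s x) = Some x) ->
  model G (ren s K) (fun y => omap s (r y)).
Proof.
move=> M inj hs.
have rsP y x' : omap s (r y) = Some x' -> exists2 z, r y = Some z & x' = s z.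
  by case: (r y) => //= z -[<-]; exists z.
have branch_ren z : branch_adj G (fun y => omap s (r y)) (s z) =2 branch_adj G r z.
  move=> a b; rewrite /branch_adj.
  by case: (r a) (r b) => [?|] [?|] //=; rewrite !(inj_eq Some_inj) ?(inj_eq inj).
have s2 a b : s @: [set a; b] = [set s a; s b] by rewrite imsetU1 imset_set1.
split.
- move=> e' /imsetP[e /(wf_edge (model_wf M)) [a [b [-> hab]]] ->].
  have [ab aK bK] := wf_adj (model_wf M) hab.
  by exists (s a), (s b); rewrite s2 (inj_eq inj) !imset_f.
- by move=> _ /imsetP[x xK ->]; rewrite hs.
- by move=> y _ /rsP[z /(model_rng M) zK ->]; apply: imset_f.
- by move=> y x' /rsP[z /(model_dom M)].
- move=> y _ /rsP[z ry ->]; rewrite (eq_connect (branch_ren z)).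
  apply: connect_trans (model_connect M ry) _.
  by rewrite connect_branchC; apply: (model_connect M (hs _ (model_rng M ry))).
- move=> a' b' /imsetP[e /(wf_edge (model_wf M)) [a [b [-> hab]]]].
  have [c [d [rc rd h]]] := model_edge M hab.
  rewrite s2 => /set2_inj [[-> ->]|[-> ->]].
    by exists c, d; rewrite rc rd.
  by exists d, c; rewrite rc rd adjC.
Qed.

Lemma model_avoid_vertex G K r v : wf_graph G -> model G K r -> mindeg_ge3 K ->
  deg G v <= 2 -> exists K' r',
  [/\ model G K' r', v \notin verts K', mindeg_ge3 K' & #|edges K'| = #|edges K|].
Proof.
move=> wf M md dv; case vK: (v \in verts K); last by exists K, r; rewrite vK.
have [t rt tv] := low_degree_branch_nontrivial wf M md vK dv.
have tK := model_nonbranch M rt tv.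
pose s := tperm v t; have inj : injective s := @perm_inj _ s.
exists (ren s K), (fun y => omap s (r y)); split.
- apply: (model_ren M inj) => x xK; case: (eqVneq x v) => [->|xv].
    by rewrite /s tpermL.
  rewrite /s tpermD; [exact: (model_self M xK)|by rewrite eq_sym|].
  by apply: contraNneq tK => ->.
- apply/imsetP => -[z zK /esym vz]; move: tK.
  by rewrite -(inj z t) ?zK // vz /s tpermR.
- exact: mindeg_ren.
- exact: card_edges_ren.
Qed.

Lemma model_contract_low_degree G K r v w : wf_graph G -> model G K r ->
  v \notin verts K -> deg G v <= 2 -> adj G v w -> exists r', model (contract G v w) K r'.
Proof.
move=> wf M vK dv hw; case rv: (r v) => [x|]; last first.
  by exists r; apply: model_contract_unlabeled.
have vx : v != x by apply: contraNneq vK => ->; apply: (model_rng M rv).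
case: (eqVneq (r w) (Some x)) => [rw|rw].
  eexists; apply: (model_contract_branch wf M vK rv rw hw) => z hz.
  exact: contract_target_adj.
have [u /and3P [hvu _ /eqP ru]] := connect_first_step (model_connect M rv) vx.
have uw : u != w by apply: contraNneq rw => <-; rewrite ru.
eexists; apply: (model_contract_branch wf M vK rv ru hvu) => z hz zu.
have /orP[/eqP->|/eqP zu'] := adj_deg2 wf dv hw hvu uw hz; last by rewrite zu' eqxx in zu.
by apply: adj_contract_new; rewrite // adjC.
Qed.

Lemma isolated_unlabeled G K r v : wf_graph G -> model G K r -> mindeg_ge3 K ->
  deg G v = 0 -> r v = None.
Proof.
move=> wf M md d0; case rv: (r v) => [x|] //; exfalso.
have degx : 0 < deg K x := leq_trans (isT : 0 < 3) (md x (model_rng M rv)).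
have [b hxb] := deg_gt0_adj (model_wf M) degx.
have [c [d [rc rd hcd]]] := model_edge M hxb.
have vc : connect (branch_adj G r x) v c.
  apply: connect_trans (model_connect M rv) _.
  by rewrite connect_branchC (model_connect M rc).
case: (eqVneq v c) => [vc'|ne]; first by move: (deg0_nadj d wf d0); rewrite vc' hcd.
have [z /and3P [hvz _ _]] := connect_first_step vc ne.
by move: (deg0_nadj z wf d0); rewrite hvz.
Qed.

Lemma red_step_model G G' K r : wf_graph G -> red_step G G' -> model G K r ->
  mindeg_ge3 K ->
  exists K' r', [/\ model G' K' r', mindeg_ge3 K' & #|edges K'| = #|edges K|].
Proof.
move=> wf [v w vG dv hw|v vG d0] M md.
  have [K1 [r1 [M1 vK1 md1 <-]]] := model_avoid_vertex wf M md dv.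
  have [r' M'] := model_contract_low_degree wf M1 vK1 dv hw.
  by exists K1, r'.
by exists K, r; split=> //; apply: model_del_vertex M (isolated_unlabeled wf M md d0).
Qed.

Lemma reduction_model G H K r : wf_graph G -> rtc (@red_step T) G H ->
  model G K r -> mindeg_ge3 K ->
  exists K' r', [/\ model H K' r', mindeg_ge3 K' & #|edges K'| = #|edges K|].
Proof.
move=> wf red M md; elim: red => [|A B rA [K1 [r1 [M1 md1 <-]]] st].
  by exists K, r.
have [K2 [r2 [M2 md2 <-]]] := red_step_model (rtc_inv wf_red_step wf rA) st M1 md1.
by exists K2, r2.
Qed.

Lemma terminal_mindeg_ge3 H : wf_graph H -> (forall H', ~ red_step H H') ->
  mindeg_ge3 H.
Proof.
move=> wf term v vH; rewrite leqNgt; apply/negP => dv.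
have [d0|/deg_gt0_adj [//|w hw]] := posnP (deg H v).
  exact: term _ (rs_isolated vH d0).
exact: term _ (rs_contract vH dv hw).
Qed.

Definition interior (p : seq T) b x := (x \in p) && (x != b).

(* [a :: P a b] is a path of G subdividing the edge [ab] of H: its interior
   avoids H and meets no path of another edge. *)
Record path_system G H (P : T -> T -> seq T) : Prop := PathSystem {
  ps_path : forall a b, adj H a b -> gpath G a b (P a b);
  ps_out : forall a b x, adj H a b -> interior (P a b) b x -> x \notin verts H;
  ps_disj : forall a b c d x, adj H a b -> adj H c d ->
    interior (P a b) b x -> interior (P c d) d x -> [set a; b] = [set c; d] }.

Lemma path_system_refl G : wf_graph G -> path_system G G (fun _ b => [:: b]).
Proof.
move=> wf; split=> [a b h|a b x _|a b c d x _ _]; rewrite /interior ?inE ?andbN //.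
have [_ aG bG] := wf_adj wf h.
by split; rewrite //= ?bG ?h.
Qed.

Lemma path_system_del G H P v : path_system G H P -> path_system G (del_vertex H v) P.
Proof.
case=> pa po pd; split=> [a b|a b x|a b c d x]; rewrite ?adj_del_vertex.
- by case/and3P=> /pa.
- by case/and3P=> h _ _ /(po _ _ _ h) xH; rewrite verts_del_vertex !inE (negbTE xH) andbF.
- by case/and3P=> h1 _ _ /and3P[h2 _ _]; apply: pd.
Qed.

Lemma gpath_cat G a m b p q : gpath G a m p -> gpath G m b q -> gpath G a b (p ++ q).
Proof.
case=> aG pG pp <- [_ qG qp <-]; split=> //.
- by rewrite all_cat pG qG.
- by rewrite cat_path pp qp.
- by rewrite last_cat.
Qed.

Lemma interior_cat p q m b x : interior (p ++ q) b x ->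
  [\/ interior p m x, x = m | interior q b x].
Proof.
rewrite /interior mem_cat => /andP[/orP[xp|xq] xb].
  by case: (eqVneq x m) => [->|xm]; [apply: Or32|apply: Or31; rewrite xp].
by apply: Or33; rewrite xq.
Qed.

Section ContractPaths.
Variables (G H : graph T) (P : T -> T -> seq T) (v w : T).
Hypotheses (wfH : wf_graph H) (vH : v \in verts H) (dv : deg H v <= 2).
Hypotheses (hvw : adj H v w) (PS : path_system G H P).

(* A new edge [aw] of the contraction comes from the path [a, v, w]. *)
Definition contract_paths a b : seq T :=
  if adj H a b then P a b
  else if b == w then P a v ++ P v w else P w v ++ P v b.

Lemma contract_old_edge a b : adj (contract H v w) a b -> a != v /\ b != v.
Proof.
case/(wf_adj (wf_contract wfH hvw)) => _.
by rewrite verts_contract !inE => /andP[-> _] /andP[-> _].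
Qed.

Lemma contract_new_edge a b : adj (contract H v w) a b -> ~~ adj H a b ->
  [/\ b = w, adj H a v & a != w] \/ [/\ a = w, adj H b v & b != w].
Proof.
move=> /adj_contractP [[hab _ _]|[[-> h ne]|[-> h ne]]] nab.
- by rewrite hab in nab.
- by left; split.
- by right; split.
Qed.

Definition star_interior x :=
  x = v \/ exists2 c, adj H v c & interior (P v c) c x \/ interior (P c v) v x.

Lemma interior_contract_paths a b x : adj (contract H v w) a b -> ~~ adj H a b ->
  interior (contract_paths a b) b x -> star_interior x.
Proof.
move=> h nab; rewrite /contract_paths (negbTE nab).
case: (contract_new_edge h nab) => [[-> hav aw]|[-> hbv bw]].
  rewrite eqxx => /(interior_cat v) [xi|->|xi]; [right|left|right] => //.
    by exists a; [rewrite adjC|right].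
  by exists w; [|left].
rewrite (negbTE bw) => /(interior_cat v) [xi|->|xi]; [right|left|right] => //.
  by exists w; [|right].
by exists b; [rewrite adjC|left].
Qed.

Lemma star_interior_out x : star_interior x -> x \notin verts (contract H v w).
Proof.
rewrite verts_contract !inE negb_and negbK.
case=> [->|[c hvc [xi|xi]]]; first by rewrite eqxx.
  by rewrite (ps_out PS hvc xi) orbT.
by rewrite adjC in hvc; rewrite (ps_out PS hvc xi) orbT.
Qed.

Lemma star_interior_old a b x : adj H a b -> a != v -> b != v ->
  interior (P a b) b x -> ~ star_interior x.
Proof.
move=> hab av bv xi [xv|[c hvc xi']].
  by move: (ps_out PS hab xi); rewrite xv vH.
have : v \in [set a; b].
  case: xi' => xi'; [rewrite (ps_disj PS hab hvc xi xi')|].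
    by rewrite !inE eqxx.
  by rewrite adjC in hvc; rewrite (ps_disj PS hab hvc xi xi') !inE eqxx orbT.
by rewrite !inE ![v == _]eq_sym (negbTE av) (negbTE bv).
Qed.

Lemma contract_new_edge_set a b : adj (contract H v w) a b -> ~~ adj H a b ->
  exists u, [/\ adj H v u, u != w & [set a; b] = [set u; w]].
Proof.
move=> h /(contract_new_edge h) [[-> hav aw]|[-> hbv bw]].
  by exists a; rewrite adjC.
by exists b; rewrite adjC set2C.
Qed.

Lemma path_system_contract : path_system G (contract H v w) contract_paths.
Proof.
split.
- move=> a b h; rewrite /contract_paths; case: ifP => [hab|/negbT nab].
    exact: (ps_path PS).
  case: (contract_new_edge h nab) => [[-> hav aw]|[-> hbv bw]].
    by rewrite eqxx; apply: gpath_cat (ps_path PS hav) (ps_path PS hvw).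
  by rewrite (negbTE bw); apply: gpath_cat (ps_path PS _) (ps_path PS _); rewrite // adjC.
- move=> a b x h; case: (boolP (adj H a b)) => [hab|nab].
    rewrite /contract_paths hab => /(ps_out PS hab).
    by rewrite verts_contract inE negb_and => ->; rewrite orbT.
  by move/(interior_contract_paths h nab)/star_interior_out.
- move=> a b c d x h1 h2.
  case: (boolP (adj H a b)) => [hab|nab]; case: (boolP (adj H c d)) => [hcd|ncd];
    rewrite /contract_paths ?hab ?hcd.
  + exact: (ps_disj PS).
  + move=> xi /(interior_contract_paths h2 ncd); have [av bv] := contract_old_edge h1.
    by move/(star_interior_old hab av bv xi).
  + move=> /(interior_contract_paths h1 nab) + xi; have [cv dv'] := contract_old_edge h2.
    by move/(star_interior_old hcd cv dv' xi).
  + move=> _ _.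
    have [u1 [hu1 u1w ->]] := contract_new_edge_set h1 nab.
    have [u2 [hu2 u2w ->]] := contract_new_edge_set h2 ncd.
    have /orP[/eqP e|/eqP -> //] := adj_deg2 wfH dv hvw hu1 u1w hu2.
    by rewrite e eqxx in u2w.
Qed.
End ContractPaths.

Lemma reduction_path_system G H : wf_graph G -> rtc (@red_step T) G H ->
  exists P, path_system G H P.
Proof.
move=> wf; elim=> [|A B rA [P PS] st].
  by exists (fun _ b => [:: b]); apply: path_system_refl.
have wfA := rtc_inv wf_red_step wf rA.
case: st => [v w vA dv hw|v _ _]; last by exists P; apply: path_system_del.
by exists (contract_paths A P v w); apply: path_system_contract.
Qed.

Lemma path_system_disjoint G H P v : wf_graph H -> path_system G H P ->
  v \in verts H -> disjoint_paths_prop G H v.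
Proof.
move=> wf PS vH; exists (P v); split=> [u|u u' hu hu' uu']; first exact: (ps_path PS).
have [vu _ uH] := wf_adj wf hu; have [_ _ u'H] := wf_adj wf hu'.
apply/setP=> x; rewrite !inE; case: (eqVneq x v) => [->|xv] //=.
apply/negbTE/negP => /andP[xu xu'].
case: (eqVneq x u) => [exu|nxu].
  have xi' : interior (P v u') u' x by rewrite /interior xu' exu.
  by move: (ps_out PS hu' xi'); rewrite exu uH.
have xi : interior (P v u) u x by rewrite /interior xu nxu.
case: (eqVneq x u') => [exu'|nxu'].
  by move: (ps_out PS hu xi); rewrite exu' u'H.
have xi' : interior (P v u') u' x by rewrite /interior xu' nxu'.
case/set2_inj: (ps_disj PS hu hu' xi xi') => [[_ e]|[_ e]].
  by rewrite e eqxx in uu'.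
by rewrite e eqxx in vu.
Qed.
End Graphs.

Theorem theorem21 (T : finType) (G H : graph T) :
  wf_graph G ->
  rtc (@red_step T) G H ->
  (forall H', ~ red_step H H') ->
  canonical_minor3core G H.
Proof.
move=> wfG red term; have wfH := rtc_inv (@wf_red_step T) wfG red.
split; first split.
- exact: rtc_sub (@red_minor_step T) red.
- exact: terminal_mindeg_ge3 wfH term.
- move=> K mK mdK; have [r M] := minor_model wfG mK.
  have [K' [r' [M' _ <-]]] := reduction_model wfG red M mdK.
  exact: (card_minor wfH (model_minor wfH M')).
- have [P PS] := reduction_path_system wfG red.
  by move=> v; apply: path_system_disjoint wfH PS.
Qed.
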